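(* In the conflict-list randomized incremental construction of the Delaunay triangulation of $n$ points in general position with uniformly random insertion order, let $T_k$ denote the work of stage $k$, i.e. $T_k=\sum_{\sigma\in\Delta(v)}\ell(\sigma)$ where $v=p_k$ is the point inserted at stage $k$, $\Delta(v)$ is the set of triangles of the Delaunay triangulation of $\{p_1,\ldots,p_k\}$ incident to $v$, and $\ell(\sigma)$ is the number of points of $P$ lying in $\sigma$. Then $\mathbb{E}[T_k^2]=O(n^2/k)$, and consequently $\sum_{k=1}^n\mathbb{E}[T_k^2]=O(n^2\log n)$.
   Context: General position: no three points collinear and no four points cocircular. The points $p_1,\ldots,p_n$ are the points of $P$ in the order of a uniformly random permutation; $\{p_1,\ldots,p_k\}$ is thus a uniformly random $k$-subset of $P$. *)

From HB Require Import structures.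
From mathcomp Require Import all_boot all_order all_algebra all_fingroup.
From Stdlib Require Import ClassicalEpsilon.
Set Implicit Arguments. Unset Strict Implicit. Unset Printing Implicit Defensive.
Import Order.TTheory GRing.Theory Num.Theory.
Local Open Scope ring_scope.

(* classical decision of a proposition, to count elements of Prop-defined sets *)
Definition pbool (Q : Prop) : bool :=
  if excluded_middle_informative Q then true else false.

Section Geom.
Variable R : realFieldType.
Definition point := (R * R)%type.

Definition sqdist (a b : point) : R := (a.1 - b.1) ^+ 2 + (a.2 - b.2) ^+ 2.

Definition collinear (a b c : point) : Prop :=
  (b.1 - a.1) * (c.2 - a.2) = (b.2 - a.2) * (c.1 - a.1).

Definition cocircular (a b c d : point) : Prop :=
  exists o : point, sqdist o a = sqdist o b /\ sqdist o a = sqdist o c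
                    /\ sqdist o a = sqdist o d.

Definition in_circumdisk (a b c d : point) : Prop :=
  exists o : point, sqdist o a = sqdist o b /\ sqdist o a = sqdist o c
                    /\ sqdist o d < sqdist o a.

Definition in_triangle (a b c d : point) : Prop :=
  exists x y z : R, [/\ 0 <= x, 0 <= y, 0 <= z, x + y + z = 1 &
    d = (x * a.1 + y * b.1 + z * c.1, x * a.2 + y * b.2 + z * c.2)].

Variable n : nat.
Variable P : 'I_n -> point.

Definition general_position : Prop :=
  injective P /\
  (forall i j l : 'I_n, i != j -> j != l -> i != l -> ~ collinear (P i) (P j) (P l)) /\
  (forall i j l m : 'I_n, uniq [:: i; j; l; m] -> ~ cocircular (P i) (P j) (P l) (P m)).

Definition delaunay_tri (S t : {set 'I_n}) : Prop :=
  #|t| = 3%N /\ t \subset S /\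
  forall a b c : 'I_n, t = [set a; b; c] ->
    forall m : 'I_n, m \in S -> ~ in_circumdisk (P a) (P b) (P c) (P m).

Definition ell (t : {set 'I_n}) : nat :=
  #|[set m : 'I_n | pbool (exists a b c : 'I_n,
        t = [set a; b; c] /\ in_triangle (P a) (P b) (P c) (P m))]|.

(* insertion order s : p_{j+1} = P (s j).  Stage i.+1 inserts v = P (s i);
   the current set is {p_1, ..., p_{i+1}}. *)
Definition stage_set (s : {perm 'I_n}) (i : 'I_n) : {set 'I_n} :=
  [set s j | j : 'I_n & (j <= i)%N].

Definition Delta (s : {perm 'I_n}) (i : 'I_n) : {set {set 'I_n}} :=
  [set t : {set 'I_n} | pbool (delaunay_tri (stage_set s i) t) && (s i \in t)].

(* work T_k at stage k = i.+1 *)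
Definition work (s : {perm 'I_n}) (i : 'I_n) : nat :=
  (\sum_(t in Delta s i) ell t)%N.

Definition ET2 (i : 'I_n) : rat :=
  (\sum_(s : {perm 'I_n}) ((work s i) ^ 2)%N%:R) / (#|{perm 'I_n}|)%:R.
End Geom.

(* Backwards analysis: given the set {p_1, ..., p_k}, the point p_k is
   uniform in it, so summing T_k over the k possible last points counts every
   triangle of the current Delaunay triangulation three times, and
   k E[T_k] <= 3 max_S sum_(sigma in DT(S)) l(sigma).  This total conflict size
   is at most 7n.  Indeed DT(S) has at most 2n triangles, since a triangle is
   determined by its lexicographically middle vertex and its orientation; and
   a point lies in at most one triangle of which it is not a vertex.  Both
   facts come from comparing the powers of points with respect to the empty
   circumcircles of two Delaunay triangles.  As also T_k <= 21n, this gives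
   E[T_k^2] <= 21n E[T_k] <= 441 n^2 / k, and the harmonic sum gives the
   O(n^2 log n) bound. *)

From HB Require Import structures.
From mathcomp Require Import all_boot all_order all_algebra all_fingroup.
From mathcomp Require Import ring lra zify.
From Stdlib Require Import ClassicalEpsilon.
Set Implicit Arguments. Unset Strict Implicit. Unset Printing Implicit Defensive.
Import Order.TTheory GRing.Theory Num.Theory.
Local Open Scope ring_scope.

Lemma leq_card_bigcup (I T : finType) (F : I -> {set T}) :
  (#|\bigcup_i F i| <= \sum_i #|F i|)%N.
Proof.
elim/big_rec2: _ => [|i n A _ IH]; first by rewrite cards0.
by rewrite cardsU (leq_trans (leq_subr _ _)) // leq_add2l.
Qed.

Lemma leq_sum_inj (I J : finType) (f : I -> J) (F : J -> nat) :
  injective f -> (\sum_i F (f i) <= \sum_j F j)%N.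
Proof.
move=> injf; rewrite -(big_imset _ (in2W injf)) /=.
by rewrite [X in (_ <= X)%N](bigID (mem (f @: predT))) /= leq_addr.
Qed.

Lemma sum_card_incidence (I T : finType) (A : {pred I}) (F : I -> {set T}) :
  (\sum_(i in A) #|F i| = \sum_x #|[set i in A | x \in F i]|)%N.
Proof.
under eq_bigr do rewrite -sum1_card.
rewrite (exchange_big_dep xpredT) //=; apply: eq_bigr => x _.
by rewrite sum1dep_card.
Qed.

Lemma pboolP (Q : Prop) : reflect Q (pbool Q).
Proof. by rewrite /pbool; case: excluded_middle_informative => h; constructor. Qed.

Lemma tournament3_path (T : eqType) (r : rel T) (x y z : T) :
    (forall u w, u != w -> r u w || r w u) -> x != y -> y != z -> x != z ->
  exists a m c,
    [/\ a \in [:: x; y; z], m \in [:: x; y; z], c \in [:: x; y; z], r a m & r m c].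
Proof.
move=> total xy yz xz; have ix : x \in [:: x; y; z] by rewrite !inE eqxx.
have iy : y \in [:: x; y; z] by rewrite !inE eqxx orbT.
have iz : z \in [:: x; y; z] by rewrite !inE eqxx !orbT.
case/orP: (total x y xy) => ?; case/orP: (total y z yz) => ?;
  case/orP: (total x z xz) => ?.
all: first [ by exists x, y, z | by exists x, z, y | by exists z, x, y
           | by exists y, x, z | by exists y, z, x | by exists z, y, x ].
Qed.

Section Geometry.
Variable R : realFieldType.
Implicit Types (a b c p q o u w : point R) (r : R).

Definition power o r p := sqdist o p - r.
Definition power_diff o1 r1 o2 r2 p := power o1 r1 p - power o2 r2 p.
Definition dif p q : point R := (p.1 - q.1, p.2 - q.2).
Definition dot p q := p.1 * q.1 + p.2 * q.2.
Definition cross p q := p.1 * q.2 - p.2 * q.1.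

Lemma circumcenter_exists a b c : ~ collinear a b c ->
  exists o, sqdist o a = sqdist o b /\ sqdist o a = sqdist o c.
Proof.
case: a b c => [a1 a2] [b1 b2] [c1 c2] /= nc.
pose d := (b1 - a1) * (c2 - a2) - (b2 - a2) * (c1 - a1).
have d0 : d != 0.
  by apply: contra_not_neq nc => /eqP; rewrite subr_eq0 => /eqP.
(* Cramer's rule for the two linear equations of the perpendicular bisectors. *)
pose na := a1 ^+ 2 + a2 ^+ 2; pose nb := b1 ^+ 2 + b2 ^+ 2; pose nc' := c1 ^+ 2 + c2 ^+ 2.
exists (((nb - na) * (c2 - a2) - (nc' - na) * (b2 - a2)) / (2 * d),
        ((nc' - na) * (b1 - a1) - (nb - na) * (c1 - a1)) / (2 * d)).
rewrite /sqdist /= {}/na {}/nb {}/nc'; move: d0; rewrite {}/d => d0.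
by split; field.
Qed.

Lemma collinear_affine a b (y z : R) : y + z = 1 ->
  collinear a b (y * a.1 + z * b.1, y * a.2 + z * b.2).
Proof.
move=> yz; have -> : y = 1 - z by rewrite -yz addrK.
by rewrite /collinear /=; ring.
Qed.

Lemma cross_dif_eq0 v a c : cross (dif a v) (dif c v) = 0 -> collinear v a c.
Proof. by move=> e; apply/eqP; rewrite -subr_eq0 -e. Qed.

Lemma power_diff_affine o1 r1 o2 r2 a b c (x y z : R) : x + y + z = 1 ->
  power_diff o1 r1 o2 r2 (x * a.1 + y * b.1 + z * c.1, x * a.2 + y * b.2 + z * c.2)
  = x * power_diff o1 r1 o2 r2 a + y * power_diff o1 r1 o2 r2 b
    + z * power_diff o1 r1 o2 r2 c.
Proof.
move=> xyz; have -> : z = 1 - (x + y) by rewrite -xyz; ring.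
by rewrite /power_diff /power /sqdist /=; ring.
Qed.

Lemma power_diffB o1 r1 o2 r2 p q :
  power_diff o1 r1 o2 r2 p - power_diff o1 r1 o2 r2 q =
  dot (2 * (o2.1 - o1.1), 2 * (o2.2 - o1.2)) (dif p q).
Proof. by rewrite /power_diff /power /dot /dif /sqdist /=; ring. Qed.

Lemma convex3_le0_eq0 (x y z p q s : R) : 0 < x -> 0 < y -> 0 < z ->
  p <= 0 -> q <= 0 -> s <= 0 -> 0 <= x * p + y * q + z * s ->
  [/\ p = 0, q = 0 & s = 0].
Proof. by move=> *; split; nra. Qed.

(* [w] lies in the open cone spanned by [A] and [C]: its coordinates
   [cross w C / cross A C] and [cross A w / cross A C] in the basis [(A, C)]
   are positive. *)
Definition in_cone (A C w : point R) : Prop :=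
  0 < cross w C * cross A C /\ 0 < cross A w * cross A C.

Lemma cross_coordinates (A C w G : point R) :
  cross A C ^+ 2 * dot G w =
  cross w C * cross A C * dot G A + cross A w * cross A C * dot G C.
Proof. by rewrite /cross /dot; ring. Qed.

Lemma in_cone_sqr_cross_gt0 (A C w : point R) : in_cone A C w -> 0 < cross A C ^+ 2.
Proof.
by move=> [pA _]; rewrite exprn_even_gt0 //; apply: contraTneq pA => ->; rewrite mulr0 ltxx.
Qed.

Lemma in_cone_dot_ge0 (A C w G : point R) : in_cone A C w ->
  0 <= dot G A -> 0 <= dot G C -> 0 <= dot G w.
Proof.
move=> cw gA gC; have := cross_coordinates A C w G.
have := in_cone_sqr_cross_gt0 cw; case: cw; nra.
Qed.

Lemma in_cone_dot_eq0 (A C w G : point R) : in_cone A C w ->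
  dot G A <= 0 -> dot G C <= 0 -> 0 <= dot G w -> dot G A = 0 /\ dot G C = 0.
Proof.
move=> cw gA gC gw; have := cross_coordinates A C w G.
have := in_cone_sqr_cross_gt0 cw; case: cw; split; nra.
Qed.

Definition lexneg u := (u.1 < 0) || ((u.1 == 0) && (u.2 < 0)).
Definition lexlt p q := lexneg (dif p q).

Lemma lexlt_irr p : ~~ lexlt p p.
Proof. by rewrite /lexlt /lexneg /dif /= !subrr ltxx eqxx. Qed.

Lemma lexlt_asym p q : lexlt p q -> ~~ lexlt q p.
Proof.
rewrite /lexlt /lexneg /dif /= => /orP [h | /andP [/eqP h1 h2]];
  apply/negP => /orP [h' | /andP [/eqP h1' h2']]; lra.
Qed.

Lemma lexlt_total p q : p != q -> lexlt p q || lexlt q p.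
Proof.
case: p q => [p1 p2] [q1 q2] ne; rewrite /lexlt /lexneg /dif /= !subr_lt0 !subr_eq0.
case: (ltgtP p1 q1) => // e1; case: (ltgtP p2 q2) => // e2.
by rewrite e1 e2 eqxx in ne.
Qed.

Lemma lexlt_chain_neq p q s : lexlt p q -> lexlt q s -> [/\ p != q, q != s & p != s].
Proof.
move=> lpq lqs; split; apply: contraTneq isT => e.
- by move: lpq; rewrite e (negbTE (lexlt_irr _)).
- by move: lqs; rewrite e (negbTE (lexlt_irr _)).
- by move: lpq; rewrite e => /lexlt_asym; rewrite lqs.
Qed.

Lemma lexneg_perturb u : lexneg u ->
  exists2 tau, 0 < tau & forall t, 0 < t -> t <= tau -> u.1 + t * u.2 < 0.
Proof.
case/orP => [u1 | /andP [/eqP u1 u2]]; last first.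
  by exists 1 => // t t0 _; rewrite u1 add0r pmulr_rlt0.
have n0 : 0 < `|u.2| + 1 by rewrite ltr_wpDl.
exists (- u.1 / (`|u.2| + 1)); first by rewrite divr_gt0 // oppr_gt0.
move=> t t0; rewrite ler_pdivlMr // => ht.
have := ler_wpM2l (ltW t0) (ler_norm u.2).
by nra.
Qed.

Lemma lex_cone_near_vertical a v c :
    lexlt a v -> lexlt v c -> cross (dif a v) (dif c v) != 0 ->
  exists2 tau, 0 < tau & forall t, 0 < t -> t <= tau ->
    in_cone (dif a v) (dif c v)
            (if 0 < cross (dif a v) (dif c v) then (t, -1) else (- t, 1)).
Proof.
move=> /lexneg_perturb [ta ta0 hA] /lexneg_perturb [tc tc0 hC] nz.
exists (Num.min ta tc) => [|t t0]; first by rewrite lt_min ta0.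
rewrite le_min => /andP [/(hA t t0) {}hA /(hC t t0) {}hC].
move: nz hA hC; rewrite /in_cone /cross /dif /= => nz hA hC.
case: ifP => sg /=; first by split; apply: mulr_gt0; lra.
have neg : (a.1 - v.1) * (c.2 - v.2) - (a.2 - v.2) * (c.1 - v.1) < 0.
  by rewrite lt_neqAle nz leNgt sg.
by split; nra.
Qed.

Lemma lex_cones_meet v a1 c1 a2 c2 :
    lexlt a1 v -> lexlt v c1 -> lexlt a2 v -> lexlt v c2 ->
    cross (dif a1 v) (dif c1 v) != 0 -> cross (dif a2 v) (dif c2 v) != 0 ->
    (0 < cross (dif a1 v) (dif c1 v)) = (0 < cross (dif a2 v) (dif c2 v)) ->
  exists w, in_cone (dif a1 v) (dif c1 v) w /\ in_cone (dif a2 v) (dif c2 v) w.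
Proof.
move=> la1 lc1 la2 lc2 nz1 nz2 sg.
have [tau1 tau1_gt0 cone1] := lex_cone_near_vertical la1 lc1 nz1.
have [tau2 tau2_gt0 cone2] := lex_cone_near_vertical la2 lc2 nz2.
pose tau := Num.min tau1 tau2.
have tau_gt0 : 0 < tau by rewrite lt_min tau1_gt0.
exists (if 0 < cross (dif a1 v) (dif c1 v) then (tau, -1) else (- tau, 1)); split.
  by apply: cone1; rewrite // ge_min lexx.
by rewrite sg; apply: cone2; rewrite // ge_min lexx orbT.
Qed.

End Geometry.

Section ThreeSets.
Variable T : finType.
Implicit Types (a b c : T) (t : {set T}).

Lemma cards3 a b c : a != b -> b != c -> a != c -> #|[set a; b; c]| = 3%N.
Proof.
by move=> ab bc ac; rewrite setUC cardsU1 cards2 !inE ab negb_or eq_sym ac eq_sym bc.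
Qed.

Lemma cards3_distinct a b c : #|[set a; b; c]| = 3%N -> [/\ a != b, b != c & a != c].
Proof.
move=> h; split; apply/eqP => e; move: h; rewrite e.
- by rewrite setUid cards2; case: (_ != _).
- by rewrite -setUA setUid cards2; case: (_ != _).
- by rewrite setUAC setUid cards2; case: (_ != _).
Qed.

Lemma cards3_eq t a b c : #|t| = 3%N -> a \in t -> b \in t -> c \in t ->
  a != b -> b != c -> a != c -> t = [set a; b; c].
Proof.
move=> t3 ta tb tc ab bc ac; apply/eqP; rewrite eq_sym eqEcard t3 cards3 // leqnn andbT.
by apply/subsetP => u; rewrite !inE => /orP [/orP [] | ] /eqP ->.
Qed.

Lemma cards3P t : #|t| = 3%N ->
  exists a b c, [/\ t = [set a; b; c], a != b, b != c & a != c].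
Proof.
move=> t3; have /card_gt2P [a [b [c [[ta tb tc] [ab bc ca]]]]] : (2 < #|t|)%N by rewrite t3.
have ac : a != c by rewrite eq_sym.
by exists a, b, c; split => //; apply: cards3_eq.
Qed.

End ThreeSets.

Section Delaunay.
Variables (R : realFieldType) (n : nat) (P : 'I_n -> point R).
Implicit Types (S t : {set 'I_n}) (o : point R) (r : R).
Implicit Types (s : {perm 'I_n}) (i j m u v : 'I_n).

Definition empty_circle S t o r : Prop :=
  (forall m, m \in t -> power o r (P m) = 0) /\
  (forall m, m \in S -> m \notin t -> 0 < power o r (P m)).

Lemma empty_circle_ge0 S t o r m : empty_circle S t o r -> m \in S ->
  0 <= power o r (P m).
Proof.
by case=> on out mS; case: (boolP (m \in t)) => mt; [rewrite on | exact/ltW/out].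
Qed.

Lemma empty_circle_eq0 S t o r m : empty_circle S t o r -> m \in S ->
  power o r (P m) = 0 -> m \in t.
Proof. by case=> _ out mS e; apply: contraT => /(out m mS); rewrite e ltxx. Qed.

Lemma delaunay_tri_eq S t1 t2 : delaunay_tri P S t1 -> delaunay_tri P S t2 ->
  t1 \subset t2 -> t1 = t2.
Proof. by move=> [t13 _] [t23 _] sub12; apply/eqP; rewrite eqEcard sub12 t13 t23. Qed.

Section TwoCircles.
Variables (S t1 t2 : {set 'I_n}) (o1 o2 : point R) (r1 r2 : R).
Hypotheses (t1S : t1 \subset S) (t2S : t2 \subset S).
Hypotheses (c1 : empty_circle S t1 o1 r1) (c2 : empty_circle S t2 o2 r2).

Lemma power_diff_le0 u : u \in t1 -> power_diff o1 r1 o2 r2 (P u) <= 0.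
Proof.
move=> ut; rewrite /power_diff c1.1 // sub0r oppr_le0.
exact: empty_circle_ge0 c2 (subsetP t1S u ut).
Qed.

Lemma power_diff_ge0 u : u \in t2 -> 0 <= power_diff o1 r1 o2 r2 (P u).
Proof.
move=> ut; rewrite /power_diff c2.1 // subr0.
exact: empty_circle_ge0 c1 (subsetP t2S u ut).
Qed.

Lemma power_diff_ge0_subset :
  (forall u, u \in t1 -> 0 <= power_diff o1 r1 o2 r2 (P u)) -> t1 \subset t2.
Proof.
move=> ge0; apply/subsetP => u ut; apply: (empty_circle_eq0 c2 (subsetP t1S u ut)).
have := power_diff_le0 ut; have := ge0 u ut.
by rewrite /power_diff c1.1 // sub0r => *; apply/eqP; rewrite -oppr_eq0 eq_le; apply/andP.
Qed.

End TwoCircles.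

Hypothesis gpP : general_position P.

Lemma delaunay_empty_circle S t : delaunay_tri P S t ->
  exists o r, empty_circle S t o r.
Proof.
move=> [t3 [_ emp]]; have [a [b [c [et ab bc ac]]]] := cards3P t3.
have [_ [gp_nc gp_ncc]] := gpP.
have [o [oab oac]] := circumcenter_exists (gp_nc _ _ _ ab bc ac).
exists o, (sqdist o (P a)); split.
  by move=> m; rewrite et !inE /power => /orP [/orP [] | ] /eqP ->; rewrite -?oab -?oac subrr.
move=> m mS; rewrite et !inE !negb_or => /andP [/andP [ma mb] mc].
rewrite /power subr_gt0 lt_neqAle; apply/andP; split.
  apply/eqP => e; apply: (gp_ncc a b c m); last by exists o.
  by rewrite /= !inE !negb_or ab ac bc !(eq_sym _ m) ma mb mc.
by rewrite leNgt; apply/negP => lt; apply: (emp a b c et m mS); exists o.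
Qed.

Definition lies_in t m : Prop :=
  exists a b c, t = [set a; b; c] /\ in_triangle (P a) (P b) (P c) (P m).

Lemma barycentric_gt0 a b c j (x y z : R) : j \notin [set a; b; c] ->
    a != b -> b != c -> a != c -> 0 <= x -> 0 <= y -> 0 <= z -> x + y + z = 1 ->
    P j = (x * (P a).1 + y * (P b).1 + z * (P c).1,
           x * (P a).2 + y * (P b).2 + z * (P c).2) ->
  [/\ 0 < x, 0 < y & 0 < z].
Proof.
rewrite !inE !negb_or => /andP [/andP [ja jb] jc] ab bc ac x0 y0 z0 xyz ej.
have [_ [gp_nc _]] := gpP.
have edge u w (p q : R) : u != w -> j != u -> j != w -> p + q = 1 ->
    P j = (p * (P u).1 + q * (P w).1, p * (P u).2 + q * (P w).2) -> False.
  move=> uw ju jw pq e; apply: (gp_nc u w j uw); rewrite 1?eq_sym //.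
  by rewrite e; apply: collinear_affine.
split; rewrite lt_neqAle ?x0 ?y0 ?z0 andbT; apply/eqP => e0; rewrite -e0 in xyz ej.
- by apply: (edge b c y z) => //; [rewrite -xyz add0r | rewrite ej; congr (_, _); ring].
- by apply: (edge a c x z) => //; [rewrite -xyz addr0 | rewrite ej; congr (_, _); ring].
- by apply: (edge a b x y) => //; [rewrite -xyz addr0 | rewrite ej; congr (_, _); ring].
Qed.

Lemma lies_in_two_delaunay S t1 t2 m :
    delaunay_tri P S t1 -> delaunay_tri P S t2 -> t1 != t2 ->
  lies_in t1 m -> lies_in t2 m -> m \in t1.
Proof.
move=> d1 d2 t12 [a [b [c [e1 [x [y [z [x0 y0 z0 xyz em]]]]]]]]
  [a' [b' [c' [e2 [x' [y' [z' [x0' y0' z0' xyz' em']]]]]]]].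
apply: contraNT t12 => mt1; apply/eqP.
have [[t13 [t1S _]] [_ [t2S _]]] := (d1, d2).
subst t1; have [ab bc ac] := cards3_distinct t13.
have [xp yp zp] := barycentric_gt0 mt1 ab bc ac x0 y0 z0 xyz em.
have [o1 [r1 c1]] := delaunay_empty_circle d1; have [o2 [r2 c2]] := delaunay_empty_circle d2.
have in_t (u v w : 'I_n) : [/\ u \in [set u; v; w], v \in [set u; v; w] & w \in [set u; v; w]].
  by rewrite !inE !eqxx !orbT.
have [at1 bt1 ct1] := in_t a b c; have [at2 bt2 ct2] := in_t a' b' c'.
subst t2.
have le0 := power_diff_le0 t1S c1 c2; have ge0 := power_diff_ge0 t2S c1 c2.
have hm1 := power_diff_affine o1 r1 o2 r2 (P a) (P b) (P c) xyz.
have hm2 := power_diff_affine o1 r1 o2 r2 (P a') (P b') (P c') xyz'.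
rewrite -em in hm1; rewrite -em' in hm2.
have hm_ge0 : 0 <= x * power_diff o1 r1 o2 r2 (P a) + y * power_diff o1 r1 o2 r2 (P b)
                   + z * power_diff o1 r1 o2 r2 (P c).
  by rewrite -hm1 hm2 !addr_ge0 // mulr_ge0 // ge0.
have [ha hb hc] := convex3_le0_eq0 xp yp zp (le0 a at1) (le0 b bt1) (le0 c ct1) hm_ge0.
apply: delaunay_tri_eq d1 d2 _; apply: power_diff_ge0_subset t1S c1 c2 _ => u.
by rewrite !inE => /orP [/orP [] | ] /eqP ->; rewrite ?ha ?hb ?hc.
Qed.

(* [v] is the lexicographic middle vertex of [t], and [b] records the
   orientation of [t]. *)
Definition lex_middle t v (b : bool) : Prop :=
  exists a c, [/\ a \in t, c \in t, lexlt (P a) (P v), lexlt (P v) (P c) &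
    (0 < cross (dif (P a) (P v)) (dif (P c) (P v))) = b].

(* The angles at [v] of two such triangles share a direction [w]; the
   difference of the powers with respect to their circles vanishes at [v] and
   has opposite signs on the two angles, hence vanishes on the first one. *)
Lemma lex_middle_uniq S t1 t2 v b :
    delaunay_tri P S t1 -> delaunay_tri P S t2 -> v \in t1 -> v \in t2 ->
  lex_middle t1 v b -> lex_middle t2 v b -> t1 = t2.
Proof.
move=> d1 d2 vt1 vt2 [a1 [c1 [at1 ct1 la1 lc1 b1]]] [a2 [c2 [at2 ct2 la2 lc2 b2]]].
have [[t13 [t1S _]] [_ [t2S _]]] := (d1, d2).
have [_ [gp_nc _]] := gpP.
have distinct a c : lexlt (P a) (P v) -> lexlt (P v) (P c) ->
    [/\ a != v, v != c & a != c].
  move=> la lc; have [av vc ac] := lexlt_chain_neq la lc.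
  by split; [move: av | move: vc | move: ac]; apply: contra_neq => ->.
have cross_neq0 a c : a != v -> v != c -> a != c ->
    cross (dif (P a) (P v)) (dif (P c) (P v)) != 0.
  move=> av vc ac; apply/eqP => /cross_dif_eq0.
  by apply: gp_nc; rewrite // eq_sym.
have [av1 vc1 ac1] := distinct _ _ la1 lc1; have [av2 vc2 ac2] := distinct _ _ la2 lc2.
have [w [cw1 cw2]] := lex_cones_meet la1 lc1 la2 lc2
  (cross_neq0 _ _ av1 vc1 ac1) (cross_neq0 _ _ av2 vc2 ac2) (etrans b1 (esym b2)).
have [o1 [r1 e1]] := delaunay_empty_circle d1; have [o2 [r2 e2]] := delaunay_empty_circle d2.
have le0 := power_diff_le0 t1S e1 e2; have ge0 := power_diff_ge0 t2S e1 e2.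
have hv : power_diff o1 r1 o2 r2 (P v) = 0.
  by apply/eqP; rewrite eq_le le0 // ge0.
pose G : point R := (2 * (o2.1 - o1.1), 2 * (o2.2 - o1.2)).
have dotE u : dot G (dif (P u) (P v)) = power_diff o1 r1 o2 r2 (P u).
  by rewrite -(power_diffB o1 r1 o2 r2) hv subr0.
have [za zc] := in_cone_dot_eq0 (G := G) cw1 (ltac:(by rewrite dotE le0)) (ltac:(by rewrite dotE le0))
  (in_cone_dot_ge0 (G := G) cw2 (ltac:(by rewrite dotE ge0)) (ltac:(by rewrite dotE ge0))).
apply: delaunay_tri_eq d1 d2 _; apply: power_diff_ge0_subset t1S e1 e2 _ => u.
rewrite (cards3_eq t13 at1 vt1 ct1 av1 vc1 ac1) !inE.
by case/orP => [/orP [] | ] /eqP ->; rewrite ?hv -?dotE ?za ?zc.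
Qed.

Definition delaunay S := [set t | pbool (delaunay_tri P S t)].

Definition fan S v b := [set t in delaunay S | (v \in t) && pbool (lex_middle t v b)].

Lemma card_fan_le1 S v b : (#|fan S v b| <= 1)%N.
Proof.
apply/card_le1_eqP => t1 t2; rewrite !inE.
move=> /and3P [/pboolP d1 vt1 /pboolP m1] /and3P [/pboolP d2 vt2 /pboolP m2].
exact: lex_middle_uniq d2 d1 vt2 vt1 m2 m1.
Qed.

Lemma delaunay_sub_fans S :
  delaunay S \subset \bigcup_(vb : 'I_n * bool) fan S vb.1 vb.2.
Proof.
apply/subsetP => t; rewrite inE => /[dup] tD /pboolP [t3 _].
have [x [y [z [et xy yz xz]]]] := cards3P t3.
have [injP _] := gpP.
have total u w : u != w -> lexlt (P u) (P w) || lexlt (P w) (P u).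
  by move=> uw; apply: lexlt_total; apply: contra uw => /eqP /injP ->.
have [a [m [c [am mm cm lam lmc]]]] := tournament3_path total xy yz xz.
have in_t u : u \in [:: x; y; z] -> u \in t by rewrite et !inE orbA.
apply/bigcupP; exists (m, 0 < cross (dif (P a) (P m)) (dif (P c) (P m))) => //=.
rewrite !inE tD in_t //=; apply/pboolP; exists a, c.
by split; rewrite ?in_t.
Qed.

Lemma card_delaunay_le S : (#|delaunay S| <= 2 * n)%N.
Proof.
apply: leq_trans (subset_leq_card (delaunay_sub_fans S)) _.
apply: leq_trans (leq_card_bigcup _) _.
apply: (@leq_trans (\sum_(vb : 'I_n * bool) 1)).
  by apply: leq_sum => vb _; apply: card_fan_le1.
by rewrite sum1_card card_prod card_ord card_bool mulnC.
Qed.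

Lemma card_lies_in_delaunay_le1 S m :
  (#|[set t in delaunay S | pbool (lies_in t m) && (m \notin t)]| <= 1)%N.
Proof.
apply/card_le1_eqP => t1 t2; rewrite !inE.
move=> /and3P [/pboolP d1 /pboolP l1 mt1] /and3P [/pboolP d2 /pboolP l2 _].
apply: contraTeq mt1 => t21; rewrite negbK.
by apply: lies_in_two_delaunay d1 d2 _ l1 l2; rewrite eq_sym.
Qed.

(* Each point is counted once for the at most one triangle containing it as a
   non-vertex, and once for each triangle of which it is a vertex. *)
Lemma sum_ell_delaunay_le S : (\sum_(t in delaunay S) ell P t <= 7 * n)%N.
Proof.
rewrite (sum_card_incidence _ (fun t => [set m | pbool (lies_in t m)])) /=.
apply: (@leq_trans (\sum_m (1 + #|[set t in delaunay S | m \in t]|))).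
  apply: leq_sum => m _.
  apply: (leq_trans _ (leq_add (card_lies_in_delaunay_le1 S m) (leqnn _))).
  apply: (leq_trans _ (leq_card_setU _ _).1).
  apply: subset_leq_card; apply/subsetP => t; rewrite !inE.
  by case: (pbool (delaunay_tri _ _ _)); case: (pbool (lies_in _ _)); case: (m \in t).
rewrite big_split /= sum1_card card_ord -(sum_card_incidence _ id) /=.
rewrite (eq_bigr (fun _ => 3%N)) => [|t]; last by rewrite inE => /pboolP [].
rewrite sum_nat_const mulnC.
apply: leq_trans (leq_add (leqnn n) (leq_mul (leqnn 3) (card_delaunay_le S))) _.
by rewrite mulnA -mulSn.
Qed.

Definition work_at s i v : nat :=
  \sum_(t in delaunay (stage_set s i) | v \in t) ell P t.

Lemma work_work_at s i : work P s i = work_at s i (s i).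
Proof. by apply: eq_bigl => t; rewrite !inE. Qed.

Lemma sum_work_at s i :
  (\sum_v work_at s i v = 3 * \sum_(t in delaunay (stage_set s i)) ell P t)%N.
Proof.
rewrite (exchange_big_dep (mem (delaunay (stage_set s i)))) => [|v t _ /andP [] //].
rewrite big_distrr /=; apply: eq_bigr => t tD.
rewrite (eq_bigl (mem t)) => [|v]; last by rewrite /= tD.
by move: tD; rewrite inE sum_nat_const => /pboolP [->].
Qed.

Lemma work_le s i : (work P s i <= 3 * (7 * n))%N.
Proof.
rewrite work_work_at; apply: (leq_trans _ (leq_mul (leqnn 3) (sum_ell_delaunay_le (stage_set s i)))).
by rewrite -sum_work_at (bigD1 (s i)) //= leq_addr.
Qed.

Lemma stage_set_tperm s i j : (j <= i)%N ->
  stage_set (tperm i j * s)%g i = stage_set s i.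
Proof.
move=> ji; have tperm_le x : (tperm i j x <= i)%N = (x <= i)%N.
  by case: tpermP => [-> | -> |] //; rewrite leqnn ji.
apply/setP => u; apply/imsetP/imsetP => [[x] | [x]]; rewrite inE => xi ->.
  by exists (tperm i j x); rewrite ?inE ?tperm_le // permM.
by exists (tperm i j x); rewrite ?inE ?tperm_le // permM tpermK.
Qed.

(* Backwards analysis: swapping the insertion times of [p_(i+1)] and an earlier
   point does not change the current point set. *)
Lemma sum_work_at_stage i j : (j <= i)%N ->
  (\sum_s work_at s i (s j) = \sum_s work P s i)%N.
Proof.
move=> ji; rewrite [RHS](reindex_inj (mulgI (tperm i j))) /=.
by apply: eq_bigr => s _; rewrite work_work_at /work_at stage_set_tperm // permM tpermL.
Qed.

Lemma sum_work_le i :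
  (i.+1 * \sum_s work P s i <= 3 * (7 * n) * #|{perm 'I_n}|)%N.
Proof.
have lt_in : (i.+1 <= n)%N := ltn_ord i.
rewrite -[i.+1]card_ord -sum_nat_const.
rewrite (eq_bigr (fun j : 'I_i.+1 => \sum_s work_at s i (s (widen_ord lt_in j)))%N); last first.
  by move=> j _; rewrite sum_work_at_stage // -ltnS (ltn_ord j).
rewrite exchange_big /=.
apply: (@leq_trans (\sum_(s : {perm 'I_n}) 3 * (7 * n))); last by rewrite sum_nat_const mulnC.
apply: leq_sum => s _.
apply: (leq_trans _ (leq_mul (leqnn 3) (sum_ell_delaunay_le (stage_set s i)))).
rewrite -sum_work_at (leq_sum_inj (fun v => work_at s i v)) //.
by move=> j k /perm_inj [] /val_inj.
Qed.

Lemma sum_work2_le i :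
  (i.+1 * \sum_s work P s i ^ 2 <= 441 * n ^ 2 * #|{perm 'I_n}|)%N.
Proof.
apply: (@leq_trans (i.+1 * \sum_s 3 * (7 * n) * work P s i)).
  rewrite leq_mul2l; apply/orP; right; apply: leq_sum => s _.
  by rewrite expnS expn1 leq_mul2r work_le orbT.
rewrite -big_distrr /= mulnCA.
apply: leq_trans (leq_mul (leqnn _) (sum_work_le i)) _.
by apply: eq_leq; ring.
Qed.

Lemma ET2_le (C : nat) i : (441 <= C)%N ->
  ET2 P i <= C%:R * (n ^ 2)%N%:R / (i.+1)%:R.
Proof.
move=> hC; rewrite /ET2 -natr_sum.
have perm_gt0 : (0 < #|{perm 'I_n}|)%N by rewrite card_Sn fact_gt0.
rewrite ler_pdivrMr ?ltr0n // mulrAC ler_pdivlMr ?ltr0n // -!natrM ler_nat mulnC.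
by apply: leq_trans (sum_work2_le i) _; rewrite !leq_mul2r hC !orbT.
Qed.

End Delaunay.

Lemma ET2_eq0 (R : realFieldType) (n : nat) (P : 'I_n -> point R) (i : 'I_n) :
  (n < 3)%N -> ET2 P i = 0.
Proof.
move=> n_lt3; rewrite /ET2 big1 ?mul0r // => s _.
suff -> : work P s i = 0%N by [].
rewrite /work big1 // => t; rewrite inE => /andP [/pboolP [t3 _] _].
by have := max_card (mem t); rewrite card_ord t3; lia.
Qed.

Section Harmonic.
Variable R : numFieldType.

Definition harmonic (N : nat) : R := \sum_(0 <= i < N) (i.+1)%:R^-1.

Lemma harmonic_le a b : (a <= b)%N -> harmonic a <= harmonic b.
Proof.
move=> ab; rewrite /harmonic (big_cat_nat (leq0n a) ab) /= lerDl.
by apply: sumr_ge0 => i _; rewrite invr_ge0 ler0n.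
Qed.

(* Each dyadic block [2^m <= i < 2^(m+1)] contributes at most [1]. *)
Lemma harmonic_exp2 m : harmonic (2 ^ m) <= m%:R + 1.
Proof.
elim: m => [|m IH]; first by rewrite /harmonic expn0 big_nat1 invr1 add0r.
have le_m : (2 ^ m <= 2 ^ m.+1)%N by rewrite leq_exp2l.
rewrite /harmonic (big_cat_nat (leq0n _) le_m) /= -natr1 lerD //.
apply: (@le_trans _ _ (\sum_(2 ^ m <= i < 2 ^ m.+1) (2 ^ m)%:R^-1)).
  rewrite !big_nat; apply: ler_sum => i /andP [hi _].
  by rewrite lef_pV2 ?posrE ?ltr0n ?expn_gt0 // ler_nat leqW.
rewrite sumr_const_nat expnS mul2n -addnn addnK -[_^-1 *+ _]mulr_natr mulVf //.
by rewrite pnatr_eq0 -lt0n expn_gt0.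
Qed.

Lemma harmonic_le_log N : (2 <= N)%N -> harmonic N <= 3 * (trunc_log 2 N)%:R.
Proof.
move=> N_ge2; have log_ge1 : (1 <= trunc_log 2 N)%N by rewrite trunc_log_gt0.
apply: le_trans (harmonic_le (ltnW (trunc_log_ltn N (isT : (1 < 2)%N)))) _.
apply: le_trans (harmonic_exp2 _) _.
rewrite natr1 -natrM ler_nat; move: log_ge1; case: (trunc_log 2 N) => // k _; lia.
Qed.

Lemma sum_le_harmonic (N c : nat) (x : R) (f : 'I_N -> R) : (2 <= N)%N -> 0 <= x ->
    (forall i : 'I_N, f i <= c%:R * x / (i.+1)%:R) ->
  \sum_i f i <= (3 * c)%:R * x * (trunc_log 2 N)%:R.
Proof.
move=> N_ge2 x0 le_f.
apply: (@le_trans _ _ (\sum_(i < N) c%:R * x / (i.+1)%:R)); first exact: ler_sum.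
rewrite -mulr_sumr -(big_mkord xpredT (fun i => (i.+1)%:R^-1)) -/(harmonic N).
apply: le_trans (ler_wpM2l (mulr_ge0 (ler0n _ c) x0) (harmonic_le_log N_ge2)) _.
by rewrite natrM mulrCA !mulrA.
Qed.

End Harmonic.

Theorem mainTheorem6 :
  exists C : nat,
  forall (R : realFieldType) (n : nat) (P : 'I_n -> point R),
    general_position P ->
    (forall i : 'I_n, ET2 P i <= C%:R * (n ^ 2)%N%:R / (i.+1)%:R) /\
    \sum_(i < n) ET2 P i <= C%:R * (n ^ 2 * trunc_log 2 n)%N%:R.
Proof.
exists (3 * 441)%N => R n P gpP; split => [i | ]; first exact: ET2_le.
have [n_lt2 | n_ge2] := ltnP n 2.
  rewrite big1 => [|i _]; first exact: mulr_ge0 (ler0n _ _) (ler0n _ _).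
  exact: ET2_eq0 (leq_trans n_lt2 _).
rewrite [(n ^ 2 * _)%N%:R]natrM mulrA.
apply: (sum_le_harmonic (c := 441)) n_ge2 (ler0n _ _) _ => i.
exact: ET2_le.
Qed.
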